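(* Let $S$ be a powerful multiset over a finite set $E$ such that $r_S(X)\le |X|$ for all $X\subseteq E$. Then $S$ is (isomorphic to) a linear powerful set.
   Context: A multiset over $E$ has indicator function $f:2^E\to\mathbb{Z}_{\ge0}$ giving multiplicities, with $f(\emptyset)\neq0$ assumed; its rank function is $r_S(X)=\log_2\Big(\sum_{Y\subseteq E} f(Y)\big/\sum_{Y\subseteq E\setminus X} f(Y)\Big)$, and $S$ is a powerful multiset if $r_S(X)\in\mathbb{Z}$ for all $X\subseteq E$. Two powerful multisets with indicator functions $f_1,f_2$ on ground sets $E_1,E_2$ are isomorphic if there is a bijection $\phi:E_1\to E_2$ and $\alpha\in\mathbb{R}\setminus\{0\}$ with $f_1(X)=\alpha f_2(\phi(X))$ for all $X$. A powerful set is a set $S\subseteq 2^E$ such that for every $X\subseteq E$ the number of members of $S$ contained in $X$ is a power of 2; it is linear if it is a binary linear space, i.e. $\emptyset\in S$ and $S$ is closed under symmetric difference. *)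

From Stdlib Require Import Reals.
From mathcomp Require Import all_boot.
Set Implicit Arguments. Unset Strict Implicit. Unset Printing Implicit Defensive.

Definition multiset (E : finType) := {set E} -> nat.

Definition msum (E : finType) (f : multiset E) : nat :=
  \sum_(Y : {set E}) f Y.

Definition msum_avoid (E : finType) (f : multiset E) (X : {set E}) : nat :=
  \sum_(Y : {set E} | Y \subset ~: X) f Y.

Definition log2 (x : R) : R := Rdiv (ln x) (ln (INR 2)).

Definition rank (E : finType) (f : multiset E) (X : {set E}) : R :=
  log2 (Rdiv (INR (msum f)) (INR (msum_avoid f X))).

Definition powerful_multiset (E : finType) (f : multiset E) : Prop :=
  forall X : {set E}, exists z : Z, rank f X = IZR z.

Definition powerful_set (E : finType) (S : {set {set E}}) : Prop :=
  forall X : {set E}, exists k : nat, #|[set Y in S | Y \subset X]| = 2 ^ k.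

Definition symdiff (E : finType) (A B : {set E}) : {set E} :=
  (A :\: B) :|: (B :\: A).

Definition linear_set (E : finType) (S : {set {set E}}) : Prop :=
  set0 \in S /\ forall A B, A \in S -> B \in S -> symdiff A B \in S.

Definition set_indicator (E : finType) (S : {set {set E}}) : multiset E :=
  fun X => if X \in S then 1 else 0.

Definition ms_isomorphic (E1 E2 : finType) (f1 : multiset E1)
    (f2 : multiset E2) : Prop :=
  exists (phi : E1 -> E2) (alpha : R), bijective phi /\ alpha <> R0 /\
    forall X : {set E1}, INR (f1 X) = Rmult alpha (INR (f2 (phi @: X))).

(* Write N for the total mass of f and N_X for the mass of the members
   avoiding X; the hypotheses say N = 2^k N_X with k <= |X|.  The Walsh
   coefficients F(s) = sum_Y f(Y) (-1)^|s :&: Y| satisfy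
   sum_(t <= s) F(t) = 2^|s| N_s = 2^(|s|-k) N, so by induction on |s| every
   F(s) is a multiple of N; as -N < F(s) <= N (the term Y = set0 is positive),
   F(s) is 0 or N.  F(s) = N forces (-1)^|s :&: Y| = 1 on the support of f, so
   Fourier inversion shows that f equals f(set0) on its support and on
   symmetric differences of support members: the support is a binary linear
   space and f is f(set0) times its indicator.  Finally
   N_(~: X) = f(set0) * #{support members inside X} while N = 2^k f(set0), so
   that number divides a power of 2. *)

From Stdlib Require Import Reals Lra Psatz ZArith.
From mathcomp Require Import all_boot all_algebra zify.
Import GRing.Theory Num.Theory.

Set Implicit Arguments.
Unset Strict Implicit.
Unset Printing Implicit Defensive.

Section Masses.
Variables (E : finType) (f : multiset E).
Implicit Types X : {set E}.

Lemma msum_avoid_gt0 X : f set0 != 0 -> 0 < msum_avoid f X.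
Proof.
move=> f0; rewrite /msum_avoid (bigD1 set0) ?sub0set //=.
by rewrite addn_gt0 lt0n f0.
Qed.

Lemma msum_avoid_le X : msum_avoid f X <= msum f.
Proof. by rewrite /msum (bigID (fun Y : {set E} => Y \subset ~: X)) leq_addr. Qed.

Lemma msum_avoid_setT : msum_avoid f setT = f set0.
Proof.
rewrite /msum_avoid setCT (big_pred1 set0) // => Y.
by rewrite subset0.
Qed.

Definition msupport : {set {set E}} := [set Y | f Y != 0].

(* [k] is the rank [r_S(X)]. *)
Definition bounded_dyadic_rank : Prop :=
  forall X, exists2 k, k <= #|X| & msum f = 2 ^ k * msum_avoid f X.

End Masses.

Section RankExponent.
Local Open Scope R_scope.

Lemma INR_expn (m n : nat) : INR (m ^ n) = pow (INR m) n.
Proof. by elim: n => [|n IHn] //=; rewrite expnS -multE mult_INR IHn. Qed.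

Lemma log2_ratio_IZR (N g : nat) (z : Z) : (0 < g)%N -> (g <= N)%N ->
  log2 (INR N / INR g) = IZR z -> exists k, N = (2 ^ k * g)%N /\ IZR z = INR k.
Proof.
move=> /ltP g_gt0 /leP g_le_N.
have two : INR 2 = 2 by rewrite /=; lra.
rewrite /log2 two => log2_z.
have g_pos : 0 < INR g by apply: lt_0_INR.
have ln2_pos : 0 < ln 2 by have := ln_lt_2; lra.
have ln_z : ln (INR N / INR g) = IZR z * ln 2.
  by rewrite -log2_z; field; lra.
have ratio_ge1 : 1 <= INR N / INR g.
  apply: (Rmult_le_reg_r (INR g)) => //; field_simplify; [exact: le_INR | lra].
have z_ge0 : Z.le 0 z.
  apply: le_0_IZR; apply: Rnot_lt_le => z_neg.
  suff : INR N / INR g < 1 by lra.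
  by apply: ln_lt_inv; [lra | lra | rewrite ln_1 ln_z; nra].
have z_nat : IZR z = INR (Z.to_nat z) by rewrite INR_IZR_INZ Z2Nat.id.
exists (Z.to_nat z); split=> //; apply: INR_eq.
have -> : INR N = INR N / INR g * INR g by field; lra.
rewrite -multE mult_INR INR_expn two; congr (_ * _).
apply: ln_inv; [lra | apply: pow_lt; lra |].
by rewrite ln_pow ?ln_z ?z_nat //; lra.
Qed.

Lemma powerful_bounded_dyadic_rank (E : finType) (f : multiset E) :
  f set0 != 0%N -> powerful_multiset f ->
  (forall X, rank f X <= INR #|X|) -> bounded_dyadic_rank f.
Proof.
move=> f0 f_pow rank_le X; have [z rank_z] := f_pow X.
have [k [msumE z_k]] := log2_ratio_IZR (msum_avoid_gt0 X f0) (msum_avoid_le f X) rank_z.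
by exists k => //; apply/leP/INR_le; rewrite -z_k -rank_z.
Qed.

End RankExponent.

Local Open Scope ring_scope.

Lemma sum_subset_prod (R : comPzSemiRingType) (I : finType) (X : {set I}) (a : I -> R) :
  \sum_(s : {set I} | s \subset X) \prod_(i in s) a i = \prod_(i in X) (1 + a i).
Proof.
pose b i := if i \in X then a i else 0.
rewrite [RHS]big_mkcond (eq_bigr (fun i => b i + 1)) => [|i _]; last first.
  by rewrite /b; case: ifP; rewrite ?add0r // addrC.
rewrite bigA_distr big_mkcond /=; apply: eq_bigr => s _.
case: ifPn => [sX | /subsetPn[i si iNX]].
  rewrite -big_mkcond; apply: eq_bigr => i si.
  by rewrite /b (subsetP sX).
by rewrite (bigD1 i) //= si /b (negbTE iNX) mul0r.
Qed.

Section WalshTransform.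
Variable E : finType.
Implicit Types s A B X Y Z : {set E}.

Definition chi s Y : int := \prod_(x in s) (-1) ^+ (x \in Y).

Lemma chi_pm1 s Y : chi s Y = 1 \/ chi s Y = -1.
Proof.
apply: (big_ind (fun v : int => v = 1 \/ v = -1)); first by left.
  by move=> a b [->|->] [->|->]; rewrite ?mulr1 ?mulrN1 ?opprK; auto.
by move=> x _; case: (x \in Y); auto.
Qed.

Lemma chis0 s : chi s set0 = 1.
Proof. by rewrite /chi big1 // => x _; rewrite in_set0. Qed.

Lemma chi_symdiff s A B : chi s A * chi s B = chi s (symdiff A B).
Proof.
rewrite /chi -big_split; apply: eq_bigr => x _ /=.
by rewrite -signr_addb /symdiff !inE; case: (x \in A); case: (x \in B).
Qed.

Lemma symdiff_eq0 A B : (symdiff A B == set0) = (A == B).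
Proof.
apply/eqP/eqP => [AB0 | ->]; last by apply/setP => x; rewrite !inE; case: (x \in B).
apply/setP => x; have /setP/(_ x) := AB0.
by rewrite !inE; case: (x \in A); case: (x \in B).
Qed.

Lemma sum_chi_subset X Y :
  \sum_(s : {set E} | s \subset X) chi s Y = if Y \subset ~: X then 2 ^+ #|X| else 0.
Proof.
rewrite sum_subset_prod; case: ifPn => [YX | /subsetPn[x xY]].
  rewrite -prodr_const; apply: eq_bigr => x xX.
  have xNY : x \notin Y by apply: contraL xX => /(subsetP YX); rewrite inE.
  by rewrite (negbTE xNY).
rewrite inE negbK => xX.
by rewrite (bigD1 x) //= xY expr1 addrN mul0r.
Qed.

Lemma sum_chi Y : \sum_(s : {set E}) chi s Y = if Y == set0 then 2 ^+ #|E| else 0.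
Proof.
rewrite -cardsT -(eq_bigl _ _ (fun s => subsetT s)) sum_chi_subset.
by rewrite setCT subset0.
Qed.

Definition walsh (f : {set E} -> nat) s : int := \sum_Y (f Y)%:Z * chi s Y.

Section Walsh.
Variable f : {set E} -> nat.

Lemma Posz_msum : (msum f)%:Z = \sum_Y (f Y)%:Z.
Proof. by rewrite -natz natr_sum; apply: eq_bigr => Y _; rewrite natz. Qed.

Lemma sum_walsh_subset X :
  \sum_(s : {set E} | s \subset X) walsh f s = 2 ^+ #|X| * (msum_avoid f X)%:Z.
Proof.
rewrite exchange_big /=.
under eq_bigr do rewrite -mulr_sumr sum_chi_subset (fun_if (GRing.mul _)) mulr0.
rewrite -big_mkcond /= -mulr_suml mulrC -natz natr_sum.
by congr (_ * _); apply: eq_bigr => Y _; rewrite natz.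
Qed.

Lemma walsh_le_msum s : walsh f s <= msum f.
Proof.
by rewrite Posz_msum; apply: ler_sum => Y _; case: (chi_pm1 s Y) => ->; lia.
Qed.

Lemma walsh_gt_opp_msum s : f set0 != 0%N -> - (msum f)%:Z < walsh f s.
Proof.
move=> f0; rewrite -subr_gt0 opprK Posz_msum /walsh -big_split /=.
rewrite (bigD1 set0) //= chis0 ltr_wpDr //.
  by apply: sumr_ge0 => Y _; case: (chi_pm1 s Y) => ->; lia.
by move: f0; lia.
Qed.

Lemma walsh_eq_msum_chi s Y : walsh f s = msum f -> f Y != 0%N -> chi s Y = 1.
Proof.
move=> /eqP; rewrite eq_sym -subr_eq0 Posz_msum /walsh -sumrB /= => /eqP sum0.
have term_ge0 Z : true -> 0 <= (f Z)%:Z - (f Z)%:Z * chi s Z.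
  by move=> _; case: (chi_pm1 s Z) => ->; lia.
have /(_ Y isT) := psumr_eq0P term_ge0 sum0.
by case: (chi_pm1 s Y) => ->; lia.
Qed.

Lemma walsh_inversion Z :
  \sum_(s : {set E}) walsh f s * chi s Z = 2 ^+ #|E| * (f Z)%:Z.
Proof.
under eq_bigr do rewrite mulr_suml.
rewrite exchange_big /=.
under eq_bigr do under eq_bigr do rewrite -mulrA chi_symdiff.
under eq_bigr do rewrite -mulr_sumr sum_chi symdiff_eq0.
rewrite (bigD1 Z) //= eqxx big1 ?addr0 => [|Y /negbTE ->]; last by rewrite mulr0.
by rewrite mulrC.
Qed.
End Walsh.

Section BoundedDyadicRank.
Variable f : multiset E.
Hypotheses (f0 : f set0 != 0%N) (f_dyadic : bounded_dyadic_rank f).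

Lemma msum_gt0 : (0 < msum f)%N.
Proof. exact: leq_trans (msum_avoid_gt0 set0 f0) (msum_avoid_le f set0). Qed.

Lemma msum_dvd_walsh s : ((msum f)%:Z %| walsh f s)%Z.
Proof.
have [n] := ubnP #|s|; elim: n s => // n IHn s /ltnSE le_s_n.
have [k le_k_s msumE] := f_dyadic s.
have := sum_walsh_subset f s; rewrite (bigD1 s) //= => sum_s.
have -> : walsh f s = 2 ^+ (#|s| - k) * (msum f)%:Z
                      - \sum_(t : {set E} | (t \subset s) && (t != s)) walsh f t.
  by rewrite msumE PoszM -[Posz (2 ^ k)]natz natrX mulrA -exprD subnK // -sum_s addrK.
rewrite rpredB ?dvdz_mull // rpred_sum // => t /andP[ts tNs].
apply: IHn; apply: leq_trans le_s_n; apply: proper_card.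
by rewrite properEneq tNs.
Qed.

Lemma walsh_eq0_or_msum s : walsh f s = 0 \/ walsh f s = msum f.
Proof.
have /dvdzP[q walshE] := msum_dvd_walsh s.
have N_gt0 : 0 < (msum f)%:Z by rewrite ltz_nat msum_gt0.
have q_le1 : q <= 1.
  by rewrite -(ler_pM2r N_gt0) mul1r -walshE walsh_le_msum.
have q_gtN1 : -1 < q.
  by rewrite -(ltr_pM2r N_gt0) mulN1r -walshE walsh_gt_opp_msum.
rewrite walshE; have [->|->] : q = 0 \/ q = 1 by lia.
  by left; rewrite mul0r.
by right; rewrite mul1r.
Qed.

Lemma eq_f0_of_chi_spectrum Z :
  (forall s, walsh f s = msum f -> chi s Z = 1) -> f Z = f set0.
Proof.
move=> chi_Z; have pow2_neq0 : 2 ^+ #|E| != 0 :> int by rewrite expf_neq0.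
apply/eqP; rewrite -eqz_nat; apply/eqP/(mulfI pow2_neq0); rewrite -!walsh_inversion.
apply: eq_bigr => s _; rewrite chis0.
by case: (walsh_eq0_or_msum s) => [-> | /chi_Z ->]; rewrite ?mul0r.
Qed.

Lemma support_eq_f0 Z : f Z != 0%N -> f Z = f set0.
Proof. by move=> fZ; apply: eq_f0_of_chi_spectrum => s /walsh_eq_msum_chi; apply. Qed.

Lemma msupport_linear : linear_set (msupport f).
Proof.
split=> [|A B]; rewrite !inE // => fA fB.
rewrite (@eq_f0_of_chi_spectrum (symdiff A B)) // => s walsh_s.
by rewrite -chi_symdiff !(walsh_eq_msum_chi walsh_s) ?mulr1.
Qed.

End BoundedDyadicRank.
End WalshTransform.

Section ConstantOnSupport.
Variables (E : finType) (f : multiset E).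
Hypotheses (f0 : f set0 != 0%N) (f_const : forall Z, f Z != 0%N -> f Z = f set0).

Lemma msum_avoidC X :
  msum_avoid f (~: X) = (#|[set Y in msupport f | Y \subset X]| * f set0)%N.
Proof.
rewrite -sum_nat_const /msum_avoid setCK big_mkcond [RHS]big_mkcond /=.
apply: eq_bigr => Y _; rewrite !inE; case: (Y \subset X); rewrite ?andbT ?andbF //.
by case: eqP => [-> | /eqP /f_const].
Qed.

Lemma msupport_powerful : bounded_dyadic_rank f -> powerful_set (msupport f).
Proof.
move=> f_dyadic X; set m := #|_|; have f0_gt0 : (0 < f set0)%N by rewrite lt0n.
have [k _ msumT] := f_dyadic setT; rewrite msum_avoid_setT in msumT.
have [l _ msumCX] := f_dyadic (~: X); rewrite msum_avoidC -/m msumT in msumCX.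
have /dvdn_pfactor[// | j _ ->] : (m %| 2 ^ k)%N.
  by apply/dvdnP; exists (2 ^ l)%N; apply/eqP; rewrite -(eqn_pmul2r f0_gt0) msumCX mulnA.
by exists j.
Qed.

Lemma ms_isomorphic_msupport : ms_isomorphic f (set_indicator (msupport f)).
Proof.
exists id, (INR (f set0)); split; [by exists id | split].
  by apply: not_0_INR; apply/eqP.
move=> X; rewrite imset_id /set_indicator inE.
by case: eqP => [-> | /eqP /f_const ->] /=; rewrite ?Rmult_0_r ?Rmult_1_r.
Qed.

End ConstantOnSupport.

Theorem theorem7 (E : finType) (f : {set E} -> nat)
  (f0 : f set0 <> 0%N)
  (Hpow : powerful_multiset f)
  (Hrk : forall X : {set E}, Rle (rank f X) (INR #|X|)) :
  exists (E' : finType) (L : {set {set E'}}),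
    powerful_set L /\ linear_set L /\ ms_isomorphic f (set_indicator L).
Proof.
have f0' : f set0 != 0%N by apply/eqP.
have f_dyadic := powerful_bounded_dyadic_rank f0' Hpow Hrk.
have f_const := support_eq_f0 f0' f_dyadic.
exists E, (msupport f); split; [|split].
- exact: msupport_powerful.
- exact: msupport_linear.
- exact: ms_isomorphic_msupport.
Qed.
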